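(* Let $E\subseteq\mathbb{R}$. The set $\mathbf{AC}(E)$ of all Abel continuous functions on $E$ is a complete subspace of the space of all continuous real functions on $E$ with respect to uniform convergence: every sequence in $\mathbf{AC}(E)$ that is uniformly Cauchy on $E$ converges uniformly on $E$ to a function belonging to $\mathbf{AC}(E)$.
   Context: A sequence $(p_n)_{n\ge0}$ is Abel convergent to $\ell$ if $\sum_{k=0}^{\infty}p_k x^k$ converges for every $0\le x<1$ and $\lim_{x\to 1^-}(1-x)\sum_{k=0}^{\infty}p_k x^k=\ell$. A function $g:E\to\mathbb{R}$ is Abel continuous on $E$ if for every sequence $(p_n)$ in $E$ Abel convergent to some $\ell\in E$, $(g(p_n))$ is Abel convergent to $g(\ell)$. *)

From Stdlib Require Import Reals.
From Coquelicot Require Import Coquelicot.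
Open Scope R_scope.

Definition abel_convergent (p : nat -> R) (l : R) : Prop :=
  (forall x : R, 0 <= x < 1 -> ex_series (fun k => p k * x ^ k)) /\
  filterlim (fun x => (1 - x) * Series (fun k => p k * x ^ k))
            (at_left 1) (locally l).

Definition abel_continuous (E : R -> Prop) (g : R -> R) : Prop :=
  forall (p : nat -> R) (l : R),
    (forall n, E (p n)) -> E l -> abel_convergent p l ->
    abel_convergent (fun n => g (p n)) (g l).

Definition unif_cauchy_on (E : R -> Prop) (f : nat -> R -> R) : Prop :=
  forall eps : R, 0 < eps -> exists N : nat, forall m n : nat,
    (N <= m)%nat -> (N <= n)%nat -> forall x, E x -> Rabs (f m x - f n x) < eps.

Definition unif_conv_on (E : R -> Prop) (f : nat -> R -> R) (g : R -> R) : Prop :=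
  forall eps : R, 0 < eps -> exists N : nat, forall n : nat,
    (N <= n)%nat -> forall x, E x -> Rabs (f n x - g x) < eps.

(* The uniform limit g exists by completeness of R. To see that g is Abel
   continuous, approximate it within d by some f_N: perturbing a sequence by
   at most d perturbs its Abel means (1 - x) sum_k q_k x^k by at most d, since
   (1 - x) sum_k d x^k = d. Hence the Abel means of g(p_n) stay within 3d of
   g(l) near x = 1, the other two contributions being |g(l) - f_N(l)| and the
   Abel convergence of f_N(p_n) to f_N(l). *)

From Stdlib Require Import Reals Lra.
From Coquelicot Require Import Coquelicot.
Open Scope R_scope.

Lemma series_geom_perturb (a b : nat -> R) (d x : R) :
  0 <= x < 1 -> ex_series b ->
  (forall k, Rabs (a k - b k) <= d * x ^ k) ->
  ex_series a /\ (1 - x) * Rabs (Series a - Series b) <= d.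
Proof.
  intros Hx Hb Hab.
  assert (Hgeom : ex_series (fun k => d * x ^ k)).
  { apply (ex_series_scal_l d (fun k => x ^ k)), ex_series_geom.
    rewrite Rabs_pos_eq; lra. }
  assert (Habs : ex_series (fun k => Rabs (a k - b k))).
  { apply (@ex_series_le R_AbsRing R_CompleteNormedModule) with (2 := Hgeom).
    intros k. change (Rabs (Rabs (a k - b k)) <= d * x ^ k).
    now rewrite Rabs_Rabsolu. }
  assert (Ha : ex_series a).
  { apply ex_series_ext with (a := fun k => plus (a k - b k) (b k)).
    - intros k. unfold plus; simpl; ring.
    - apply (@ex_series_plus R_AbsRing R_NormedModule); auto.
      now apply ex_series_Rabs. }
  split; [exact Ha |].
  rewrite <- Series_minus by auto.
  apply Rle_trans with ((1 - x) * Series (fun k => d * x ^ k)).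
  - apply Rmult_le_compat_l; [lra |].
    eapply Rle_trans; [now apply Series_Rabs |].
    apply Series_le; auto.
    intros k; split; [apply Rabs_pos | auto].
  - rewrite Series_scal_l, Series_geom by (rewrite Rabs_pos_eq; lra).
    right; field; lra.
Qed.

Lemma abel_sum_perturb (q r : nat -> R) (d x : R) :
  0 <= x < 1 -> ex_series (fun k => r k * x ^ k) ->
  (forall k, Rabs (q k - r k) <= d) ->
  ex_series (fun k => q k * x ^ k) /\
  (1 - x) * Rabs (Series (fun k => q k * x ^ k) - Series (fun k => r k * x ^ k)) <= d.
Proof.
  intros Hx Hr Hqr. apply series_geom_perturb; auto.
  intros k. rewrite <- Rmult_minus_distr_r, Rabs_mult, (Rabs_pos_eq (x ^ k))
    by (apply pow_le; lra).
  apply Rmult_le_compat_r; [apply pow_le; lra | auto].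
Qed.

Lemma at_left_1_unit_interval : at_left 1 (fun x => 0 <= x < 1).
Proof.
  exists (mkposreal 1 Rlt_0_1). intros y Hy Hy1.
  change (Rabs (y - 1) < 1) in Hy. apply Rabs_def2 in Hy. lra.
Qed.

Lemma abel_continuous_unif_closed (E : R -> Prop) (g : R -> R) :
  (forall d, 0 < d -> exists h,
     abel_continuous E h /\ forall y, E y -> Rabs (g y - h y) <= d) ->
  abel_continuous E g.
Proof.
  intros Happrox p l Hp Hl Hpl. split.
  - intros x Hx.
    destruct (Happrox 1 Rlt_0_1) as [h [Hh Hgh]].
    apply (abel_sum_perturb _ (fun k => h (p k)) 1 x Hx); auto.
    exact (proj1 (Hh p l Hp Hl Hpl) x Hx).
  - apply filterlim_locally. intros eps.
    assert (Hd : 0 < eps / 3) by (destruct eps; simpl; lra).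
    destruct (Happrox _ Hd) as [h [Hh Hgh]].
    destruct (Hh p l Hp Hl Hpl) as [Hser Hlim].
    apply (proj1 (filterlim_locally _ _)) with (eps := mkposreal _ Hd) in Hlim.
    generalize (filter_and _ _ Hlim at_left_1_unit_interval).
    apply filter_imp. intros x [Hball Hx].
    change (Rabs ((1 - x) * Series (fun k => h (p k) * x ^ k) - h l) < eps / 3)
      in Hball.
    destruct (abel_sum_perturb (fun k => g (p k)) (fun k => h (p k)) _ x Hx
                (Hser x Hx) (fun k => Hgh _ (Hp k))) as [_ Hclose].
    assert (Hgl := Hgh l Hl).
    change (Rabs ((1 - x) * Series (fun k => g (p k) * x ^ k) - g l) < eps).
    set (Sg := Series (fun k => g (p k) * x ^ k)) in *.
    set (Sh := Series (fun k => h (p k) * x ^ k)) in *.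
    replace ((1 - x) * Sg - g l) with
      ((1 - x) * (Sg - Sh) + ((1 - x) * Sh - h l) - (g l - h l)) by ring.
    eapply Rle_lt_trans; [apply Rabs_triang |].
    eapply Rle_lt_trans; [apply Rplus_le_compat_r, Rabs_triang |].
    rewrite Rabs_Ropp, Rabs_mult, (Rabs_pos_eq (1 - x)) by lra.
    lra.
Qed.

Definition pointwise_limit (f : nat -> R -> R) (x : R) : R :=
  real (Lim_seq (fun n => f n x)).

Section UniformLimit.

Variables (E : R -> Prop) (f : nat -> R -> R).
Hypothesis f_unif_cauchy : unif_cauchy_on E f.

Lemma unif_cauchy_is_lim_seq (x : R) :
  E x -> is_lim_seq (fun n => f n x) (pointwise_limit f x).
Proof.
  intros Ex.
  assert (Hex : ex_finite_lim_seq (fun n => f n x)).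
  { apply ex_lim_seq_cauchy_corr. intros eps.
    destruct (f_unif_cauchy eps (cond_pos eps)) as [N HN]. exists N.
    intros n m Hn Hm. now apply HN. }
  destruct Hex as [l Hl]. unfold pointwise_limit.
  now rewrite (is_lim_seq_unique _ _ Hl).
Qed.

Lemma unif_cauchy_unif_le (eps : R) : 0 < eps ->
  exists N, forall n, (N <= n)%nat ->
    forall x, E x -> Rabs (f n x - pointwise_limit f x) <= eps.
Proof.
  intros Heps. destruct (f_unif_cauchy eps Heps) as [N HN]. exists N.
  intros n Hn x Ex.
  change (Rbar_le (Rabs (f n x - pointwise_limit f x)) eps).
  apply (is_lim_seq_le_loc (fun m => Rabs (f n x - f m x)) (fun _ => eps)).
  - exists N. intros m Hm. left. now apply HN.
  - apply (is_lim_seq_abs _ (Finite _)), is_lim_seq_minus'.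
    + apply is_lim_seq_const.
    + now apply unif_cauchy_is_lim_seq.
  - apply is_lim_seq_const.
Qed.

Lemma unif_cauchy_unif_conv : unif_conv_on E f (pointwise_limit f).
Proof.
  intros eps Heps. destruct (unif_cauchy_unif_le (eps / 2)) as [N HN]; [lra |].
  exists N. intros n Hn x Ex. specialize (HN n Hn x Ex). lra.
Qed.

End UniformLimit.

Theorem corollary10 (E : R -> Prop) (f : nat -> R -> R) :
  (forall n : nat, abel_continuous E (f n)) ->
  unif_cauchy_on E f ->
  exists g : R -> R, unif_conv_on E f g /\ abel_continuous E g.
Proof.
  intros Hf Hc. exists (pointwise_limit f). split.
  - now apply unif_cauchy_unif_conv.
  - apply abel_continuous_unif_closed. intros d Hd.
    destruct (unif_cauchy_unif_le E f Hc d Hd) as [N HN].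
    exists (f N). split; [apply Hf |].
    intros y Ey. rewrite Rabs_minus_sym. exact (HN N (Nat.le_refl N) y Ey).
Qed.
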